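(* Let $\Phi_D$ be a set of BS indices containing $0$, $\Psi_D=\Phi_D\setminus\{0\}$ (sums assumed convergent), $K\ge1$, $\tau_c$, $\tau_p$ with $K\le\tau_p\le\tau_c$, and positive numbers $p_{l'i},q_{l'i},\beta_{0l'i}$ ($l'\in\Phi_D$, $i=1,\dots,K$), $\sigma^2$, $B_W$; fix $k$. For $M\ge1$ define the closed-form rates $$R^{rp}_{0k}(M)=B_W\Big(1-\frac{\tau_p}{\tau_c}\Big)\log_2\!\Big(1+\frac{Mp_{0k}\beta_{00k}}{\frac{M}{\tau_p}\sum_{l'\in\Psi_D}\sum_{i=1}^K\frac{p_{l'i}q_{l'i}}{q_{0k}}\frac{\beta_{0l'i}^2}{\beta_{00k}}+\frac{1}{\gamma^{rp}_{0k}}(\sum_{l'\in\Phi_D}\sum_{i=1}^Kp_{l'i}\beta_{0l'i}+\sigma^2)}\Big),$$ $\gamma^{rp}_{0k}=\frac{q_{0k}\tau_p\beta_{00k}}{q_{0k}\tau_p\beta_{00k}+\sum_{l'\in\Psi_D}\sum_iq_{l'i}\beta_{0l'i}+\sigma^2}$; $R^{sp}_{0k}(M)=B_W\log_2(1+Mp_{0k}\beta_{00k}/\mathcal I^{sp}(M))$ with $$\mathcal I^{sp}(M)=\frac{M}{\tau_c}\sum_{l'\in\Psi_D}\sum_{i=1}^K\frac{(p_{l'i}+(1-\frac1{\tau_c})q_{l'i})q_{l'i}}{q_{0k}}\frac{\beta_{0l'i}^2}{\beta_{00k}}+\frac{M}{\tau_c}\sum_{l'\in\Phi_D}\sum_{i=1}^K\frac{(p_{l'i}+q_{l'i})p_{l'i}}{q_{0k}}\frac{\beta_{0l'i}^2}{\beta_{00k}}+\frac{2}{\tau_c}p_{0k}\beta_{00k}+\frac{2}{\tau_c^2}\sum_{l'\in\Psi_D}\sum_{i=1}^K\frac{q_{l'i}p_{l'i}}{q_{0k}}\frac{\beta_{0l'i}^2}{\beta_{00k}}+\frac{1}{\tau_c^2}\sum_{l'\in\Phi_D}\sum_{i=1}^K\frac{p_{l'i}^2}{q_{0k}}\frac{\beta_{0l'i}^2}{\beta_{00k}}+\frac{1}{\gamma^{sp}_{0k}}\Big(\sum_{l'\in\Phi_D}\sum_{i=1}^K(q_{l'i}+p_{l'i})\beta_{0l'i}+\sigma^2\Big),$$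 and $R^{sp\text{-}ub}_{0k}(M)=B_W\log_2(1+Mp_{0k}\beta_{00k}/\mathcal I^{sp\text{-}ub}(M))$ with $$\mathcal I^{sp\text{-}ub}(M)=\frac{M}{\tau_c}\sum_{l'\in\Psi_D}\sum_{i=1}^K\frac{p_{l'i}q_{l'i}}{q_{0k}}\frac{\beta_{0l'i}^2}{\beta_{00k}}+\frac{M}{\tau_c}\sum_{l'\in\Phi_D}\sum_{i=1}^K\frac{p_{l'i}^2}{q_{0k}}\frac{\beta_{0l'i}^2}{\beta_{00k}}+\frac{1}{\tau_c^2}\sum_{l'\in\Phi_D}\sum_{i=1}^K\frac{p_{l'i}^2}{q_{0k}}\frac{\beta_{0l'i}^2}{\beta_{00k}}+\frac{1}{\gamma^{sp}_{0k}}\Big(\sum_{l'\in\Phi_D}\sum_{i=1}^Kp_{l'i}\beta_{0l'i}+\sigma^2\Big),$$ where $\gamma^{sp}_{0k}=\frac{q_{0k}\tau_c\beta_{00k}}{q_{0k}\tau_c\beta_{00k}+\sum_{l'\in\Psi_D}\sum_iq_{l'i}\beta_{0l'i}+\sum_{l'\in\Phi_D}\sum_ip_{l'i}\beta_{0l'i}+\sigma^2}$. Then, as $M\to\infty$, $$R^{rp}_{0k}(M)\to R^{a\text{-}rp}_{0k}=\Big(1-\frac{\tau_p}{\tau_c}\Big)B_W\log_2\!\Big(1+\frac{p_{0k}\beta_{00k}}{\frac1{\tau_p}\sum_{l'\in\Psi_D}\sum_{i=1}^K\frac{p_{l'i}q_{l'i}}{q_{0k}}\frac{\beta_{0l'i}^2}{\beta_{00k}}}\Big),$$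 $$R^{sp}_{0k}(M)\to R^{a\text{-}sp}_{0k}=B_W\log_2\!\Big(1+\frac{p_{0k}\beta_{00k}}{\frac1{\tau_c}\sum_{l'\in\Psi_D}\sum_{i=1}^K\frac{(p_{l'i}+(1-\frac1{\tau_c})q_{l'i})q_{l'i}}{q_{0k}}\frac{\beta_{0l'i}^2}{\beta_{00k}}+\frac1{\tau_c}\sum_{l'\in\Phi_D}\sum_{i=1}^K\frac{(p_{l'i}+q_{l'i})p_{l'i}}{q_{0k}}\frac{\beta_{0l'i}^2}{\beta_{00k}}}\Big),$$ and $$R^{a\text{-}sp}_{0k}\le B_W\log_2\!\Big(1+\frac{p_{0k}\beta_{00k}}{\frac1{\tau_c}\sum_{l'\in\Psi_D}\sum_{i=1}^K\frac{p_{l'i}q_{l'i}}{q_{0k}}\frac{\beta_{0l'i}^2}{\beta_{00k}}+\frac1{\tau_c}\sum_{l'\in\Phi_D}\sum_{i=1}^K\frac{p_{l'i}^2}{q_{0k}}\frac{\beta_{0l'i}^2}{\beta_{00k}}}\Big),$$ the latter being $\lim_{M\to\infty}R^{sp\text{-}ub}_{0k}(M)$.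
   Context: $R^{rp}_{0k}$, $R^{sp}_{0k}$, $R^{sp\text{-}ub}_{0k}$ are the closed-form ergodic achievable rates of user $k$ in cell $0$ of a multicell massive MIMO uplink with $M$ BS antennas per cell and maximum ratio combining, using respectively regular pilots of length $\tau_p$, superimposed pilots over the whole coherence block of $\tau_c$ samples, and superimposed pilots with perfect pilot subtraction; $p_{l'i},q_{l'i}$ are data and pilot powers of user $i$ in cell $l'$ and $\beta_{0l'i}$ its large-scale fading to BS $0$. *)

From HB Require Import structures.
From mathcomp Require Import all_boot all_order all_algebra.
From mathcomp Require Import all_classical all_reals all_analysis.
Set Implicit Arguments. Unset Strict Implicit. Unset Printing Implicit Defensive.
Import Order.TTheory GRing.Theory Num.Theory numFieldNormedType.Exports.
Local Open Scope ring_scope.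

(* Cells (BS indices) are natural numbers; cell 0 is the reference cell.
   The cell set Phi_D is a (possibly infinite) predicate on nat containing 0.
   Users in each cell are indexed 0..K-1 (paper: 1..K).
   p l i, q l i : data / pilot power of user i in cell l;
   b l i        : beta_{0 l i}, large-scale fading from user i of cell l to BS 0. *)

Definition Psi (Phi : pred nat) : pred nat := fun l => (l != 0%N) && Phi l.

Section Rates.
Variable R : realType.

Definition cellseries (Phi : pred nat) (K : nat) (f : nat -> nat -> R) : R ^nat :=
  series (fun l => if Phi l then \sum_(i < K) f l i else 0).

Definition cellsum (Phi : pred nat) (K : nat) (f : nat -> nat -> R) : R :=
  limn (cellseries Phi K f).

Definition log2 (x : R) : R := ln x / ln 2.

Definition wsum (S : pred nat) (K : nat) (q b : nat -> nat -> R) (k : nat)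
  (w : nat -> nat -> R) : R :=
  cellsum S K (fun l i => w l i / q 0%N k * (b l i ^+ 2 / b 0%N k)).

Section Params.
Variables (Phi : pred nat) (K tc tp : nat) (p q b : nat -> nat -> R)
          (s2 BW : R) (k : nat).

Let p0 := p 0%N k.
Let q0 := q 0%N k.
Let b0 := b 0%N k.
Let Tc : R := tc%:R.
Let Tp : R := tp%:R.
Let W S w := wsum S K q b k w.

Definition gamma_rp : R :=
  q0 * Tp * b0 / (q0 * Tp * b0 + cellsum (Psi Phi) K (fun l i => q l i * b l i) + s2).

Definition gamma_sp : R :=
  q0 * Tc * b0 / (q0 * Tc * b0 + cellsum (Psi Phi) K (fun l i => q l i * b l i)
                  + cellsum Phi K (fun l i => p l i * b l i) + s2).

Definition R_rp (M : nat) : R :=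
  BW * (1 - Tp / Tc) * log2 (1 + M%:R * p0 * b0 /
     (M%:R / Tp * W (Psi Phi) (fun l i => p l i * q l i)
      + gamma_rp^-1 * (cellsum Phi K (fun l i => p l i * b l i) + s2))).

Definition I_sp (M : nat) : R :=
  M%:R / Tc * W (Psi Phi) (fun l i => (p l i + (1 - Tc^-1) * q l i) * q l i)
  + M%:R / Tc * W Phi (fun l i => (p l i + q l i) * p l i)
  + 2 / Tc * p0 * b0
  + 2 / Tc ^+ 2 * W (Psi Phi) (fun l i => q l i * p l i)
  + 1 / Tc ^+ 2 * W Phi (fun l i => p l i ^+ 2)
  + gamma_sp^-1 * (cellsum Phi K (fun l i => (q l i + p l i) * b l i) + s2).

Definition R_sp (M : nat) : R := BW * log2 (1 + M%:R * p0 * b0 / I_sp M).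

Definition I_spub (M : nat) : R :=
  M%:R / Tc * W (Psi Phi) (fun l i => p l i * q l i)
  + M%:R / Tc * W Phi (fun l i => p l i ^+ 2)
  + 1 / Tc ^+ 2 * W Phi (fun l i => p l i ^+ 2)
  + gamma_sp^-1 * (cellsum Phi K (fun l i => p l i * b l i) + s2).

Definition R_spub (M : nat) : R := BW * log2 (1 + M%:R * p0 * b0 / I_spub M).

Definition R_a_rp : R :=
  (1 - Tp / Tc) * BW * log2 (1 + p0 * b0 /
     (Tp^-1 * W (Psi Phi) (fun l i => p l i * q l i))).

Definition R_a_sp : R :=
  BW * log2 (1 + p0 * b0 /
     (Tc^-1 * W (Psi Phi) (fun l i => (p l i + (1 - Tc^-1) * q l i) * q l i)
      + Tc^-1 * W Phi (fun l i => (p l i + q l i) * p l i))).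

Definition R_a_spub : R :=
  BW * log2 (1 + p0 * b0 /
     (Tc^-1 * W (Psi Phi) (fun l i => p l i * q l i)
      + Tc^-1 * W Phi (fun l i => p l i ^+ 2))).

End Params.
End Rates.

From HB Require Import structures.
From mathcomp Require Import all_boot all_order all_algebra.
From mathcomp Require Import all_classical all_reals all_analysis.
From mathcomp Require Import ring.
Set Implicit Arguments. Unset Strict Implicit. Unset Printing Implicit Defensive.
Import Order.TTheory GRing.Theory Num.Theory numFieldNormedType.Exports.
Local Open Scope ring_scope.
Local Open Scope classical_set_scope.

(** Each of the three interference terms is affine in the number of antennas,
    [I(M) = M A + B], where the slope [A] collects the pilot-contamination and
    data-interference sums weighted by [beta^2] and is positive as soon as
    there is an interfering cell.  Hence the SINR [M c / (M A + B)] tends to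
    [c / A] whatever the constant term [B] (which is where the noise and the
    estimation-quality factors [gamma] live), and continuity of [ln] gives the
    limit rates.  For the bound, the superimposed-pilot slope dominates the
    perfect-subtraction slope term by term, since
    [(p + (1 - 1/tau_c) q) q >= p q] and [(p + q) p >= p^2], and the rate is
    antitone in the slope. *)

Section CellSeries.
Variables (R : realType) (K : nat).
Implicit Types (S : pred nat) (f g : nat -> nat -> R).

Lemma eq_cellseries S f g :
  (forall l i, S l -> (i < K)%N -> f l i = g l i) ->
  cellseries S K f = cellseries S K g.
Proof.
move=> efg; congr series; apply/funext => l.
by case: ifP => // Sl; apply: eq_bigr => i _; apply: efg.
Qed.

Lemma cellseriesD S f g :
  cellseries S K (fun l i => f l i + g l i) = cellseries S K f + cellseries S K g.
Proof.
apply/funext => n; rewrite -[RHS]/(_ n + _ n) -big_split /=.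
by apply: eq_bigr => l _; case: (S l); rewrite ?big_split ?addr0.
Qed.

Lemma cellseriesZ S c f :
  cellseries S K (fun l i => c * f l i) = (fun=> c) \* cellseries S K f.
Proof.
apply/funext => n; rewrite /cellseries /series /= big_distrr /=.
by apply: eq_bigr => l _; case: (S l); rewrite ?big_distrr ?mulr0.
Qed.

Lemma is_cvg_cellseriesD S f g :
  cvgn (cellseries S K f) -> cvgn (cellseries S K g) ->
  cvgn (cellseries S K (fun l i => f l i + g l i)).
Proof. by rewrite cellseriesD; apply: is_cvgD. Qed.

Lemma is_cvg_cellseriesZ S c f :
  cvgn (cellseries S K f) -> cvgn (cellseries S K (fun l i => c * f l i)).
Proof. by rewrite cellseriesZ; apply: is_cvgMr. Qed.

Lemma cellseries_PsiS S f n : S 0%N ->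
  cellseries (Psi S) K f n.+1 = cellseries S K f n.+1 - \sum_(i < K) f 0%N i.
Proof.
by move=> S0; rewrite /cellseries /series /= !big_nat_recl // /Psi /= S0 add0r addrC addKr.
Qed.

Lemma is_cvg_cellseries_Psi S f : S 0%N ->
  cvgn (cellseries S K f) -> cvgn (cellseries (Psi S) K f).
Proof.
move=> S0 cvgf; apply/(cvgP (cellsum S K f - \sum_(i < K) f 0%N i)).
rewrite -cvg_shiftS /=; under eq_fun do rewrite cellseries_PsiS //.
by apply: cvgB; [rewrite cvg_shiftS | exact: cvg_cst].
Qed.

Lemma ler_cellsum S f g :
  (forall l i, S l -> (i < K)%N -> f l i <= g l i) ->
  cvgn (cellseries S K f) -> cvgn (cellseries S K g) ->
  cellsum S K f <= cellsum S K g.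
Proof.
move=> lefg cvgf cvgg; apply: ler_lim => //; apply: nearW => n.
apply: ler_sum => l _; case: ifP => // Sl.
by apply: ler_sum => i _; apply: lefg.
Qed.

Lemma cellseries_le_cellsum S f n :
  (forall l i, S l -> (i < K)%N -> 0 <= f l i) ->
  cvgn (cellseries S K f) -> cellseries S K f n <= cellsum S K f.
Proof.
move=> f_ge0 cvgf; apply: nondecreasing_cvgn_le => // m m' le_mm'.
rewrite /cellseries /series /= (big_cat_nat (leq0n m) le_mm') /= lerDl.
apply: sumr_ge0 => l _; case: ifP => // Sl.
by apply: sumr_ge0 => i _; apply: f_ge0.
Qed.

Lemma cellsum_gt0 S f : (0 < K)%N -> (exists l, S l) ->
  (forall l i, S l -> (i < K)%N -> 0 < f l i) ->
  cvgn (cellseries S K f) -> 0 < cellsum S K f.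
Proof.
move=> K_gt0 [l Sl] f_gt0 cvgf.
have f_ge0 l' i : S l' -> (i < K)%N -> 0 <= f l' i by move=> *; apply/ltW/f_gt0.
apply: lt_le_trans (cellseries_le_cellsum l.+1 f_ge0 cvgf).
rewrite /cellseries /series /= big_nat_recr //= Sl ltr_wpDl //.
  by apply: sumr_ge0 => l' _; case: ifP => // Sl'; apply: sumr_ge0 => i _; apply: f_ge0.
by rewrite (bigD1 (Ordinal K_gt0)) //= ltr_pwDl ?f_gt0 // sumr_ge0 // => i _; apply: f_ge0.
Qed.

End CellSeries.

Section WeightedSum.
Variables (R : realType) (K : nat) (q b : nat -> nat -> R) (k : nat).
Implicit Types (S : pred nat) (w : nat -> nat -> R).

Lemma wsum_termE w :
  (fun l i => w l i / q 0%N k * (b l i ^+ 2 / b 0%N k)) =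
  (fun l i => (q 0%N k * b 0%N k)^-1 * (w l i * b l i ^+ 2)).
Proof. by apply/funext => l; apply/funext => i; rewrite invfM; ring. Qed.

Hypotheses (q0_gt0 : 0 < q 0%N k) (b0_gt0 : 0 < b 0%N k).

Lemma ler_wsum S w1 w2 :
  (forall l i, S l -> (i < K)%N -> w1 l i <= w2 l i) ->
  cvgn (cellseries S K (fun l i => w1 l i * b l i ^+ 2)) ->
  cvgn (cellseries S K (fun l i => w2 l i * b l i ^+ 2)) ->
  wsum S K q b k w1 <= wsum S K q b k w2.
Proof.
move=> le_w cvg1 cvg2; rewrite /wsum !wsum_termE.
apply: ler_cellsum; try exact: is_cvg_cellseriesZ.
move=> l i Sl iK; apply: ler_wpM2l; first by rewrite invr_ge0 mulr_ge0 ?ltW.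
by apply: ler_wpM2r; [exact: sqr_ge0 | exact: le_w].
Qed.

Lemma wsum_gt0 S w : (0 < K)%N -> (exists l, S l) ->
  (forall l i, S l -> (i < K)%N -> 0 < w l i * b l i ^+ 2) ->
  cvgn (cellseries S K (fun l i => w l i * b l i ^+ 2)) ->
  0 < wsum S K q b k w.
Proof.
move=> K_gt0 S_neq0 w_gt0 cvgw; rewrite /wsum wsum_termE.
apply: cellsum_gt0 => //; last exact: is_cvg_cellseriesZ.
by move=> l i Sl iK; rewrite mulr_gt0 ?w_gt0 // invr_gt0 mulr_gt0.
Qed.

End WeightedSum.

Section RateLimits.
Variable R : realType.

Lemma cvg_ratio_affine (A B c : R) : A != 0 ->
  (fun M : nat => M%:R * c / (M%:R * A + B)) @ \oo --> c / A.
Proof.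
move=> A_neq0; rewrite -cvg_shiftS.
have -> : (fun n : nat => n.+1%:R * c / (n.+1%:R * A + B)) =
          (fun n => c * (A + B * harmonic n)^-1).
  apply/funext => n; rewrite /harmonic /=.
  have n_neq0 : n.+1%:R != 0 :> R by rewrite pnatr_eq0.
  have -> : n.+1%:R * A + B = n.+1%:R * (A + B * n.+1%:R^-1) by field.
  by rewrite invfM mulrA (mulrAC _ c) divff // mul1r.
apply: (cvgM (cvg_cst c)); apply: cvgV => //.
rewrite -[X in _ --> X]addr0; apply: cvgD; first exact: cvg_cst.
by rewrite -(mulr0 B); apply: (cvgM (cvg_cst B)); exact: cvg_harmonic.
Qed.

Lemma cvg_rate (BW A B c : R) (I : nat -> R) :
  (forall M, I M = M%:R * A + B) -> 0 < A -> 0 < c ->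
  (fun M : nat => BW * log2 (1 + M%:R * c / I M)) @ \oo --> BW * log2 (1 + c / A).
Proof.
move=> IE A_gt0 c_gt0; under eq_fun do rewrite IE.
apply: cvgMr; apply: cvgMl.
apply: continuous_cvg; first exact/continuous_ln/addr_gt0/divr_gt0.
by apply: cvgD; [exact: cvg_cst | exact/cvg_ratio_affine/lt0r_neq0].
Qed.

Lemma ler_rate (BW c D1 D2 : R) : 0 <= BW -> 0 < c -> 0 < D2 -> D2 <= D1 ->
  BW * log2 (1 + c / D1) <= BW * log2 (1 + c / D2).
Proof.
move=> BW_ge0 c_gt0 D2_gt0 le_D; have D1_gt0 := lt_le_trans D2_gt0 le_D.
apply: ler_wpM2l => //; apply: ler_wpM2r; first by rewrite invr_ge0 ltW // ln_gt0 // ltr1n.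
rewrite ler_ln ?posrE ?addr_gt0 ?divr_gt0 // lerD2l.
by apply: ler_wpM2l; [exact: ltW | rewrite lef_pV2 ?posrE].
Qed.

End RateLimits.

Section Corollary2.
Variables (R : realType) (Phi : pred nat) (K tc tp : nat) (p q b : nat -> nat -> R)
  (s2 BW : R) (k : nat).
Hypotheses (Phi0 : Phi 0%N) (Psi_neq0 : exists l, Psi Phi l)
  (K_gt0 : (0 < K)%N) (k_lt_K : (k < K)%N) (tp_gt0 : (0 < tp)%N) (tc_gt0 : (0 < tc)%N)
  (pqb_gt0 : forall l i, Phi l -> (i < K)%N -> 0 < p l i /\ 0 < q l i /\ 0 < b l i)
  (cvg_pqb2 : cvgn (cellseries Phi K (fun l i => p l i * q l i * b l i ^+ 2)))
  (cvg_ppb2 : cvgn (cellseries Phi K (fun l i => p l i ^+ 2 * b l i ^+ 2)))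
  (cvg_qqb2 : cvgn (cellseries Phi K (fun l i => q l i ^+ 2 * b l i ^+ 2))).

Local Notation Tc := (tc%:R : R).
Local Notation W S w := (wsum S K q b k w).

Let Psi_Phi l : Psi Phi l -> Phi l. Proof. by case/andP. Qed.
Let p0_gt0 : 0 < p 0%N k. Proof. by case: (pqb_gt0 Phi0 k_lt_K). Qed.
Let q0_gt0 : 0 < q 0%N k. Proof. by case: (pqb_gt0 Phi0 k_lt_K) => _ []. Qed.
Let b0_gt0 : 0 < b 0%N k. Proof. by case: (pqb_gt0 Phi0 k_lt_K) => _ []. Qed.
Let Tc_gt0 : 0 < Tc. Proof. by rewrite ltr0n. Qed.
Let one_subVTc_ge0 : 0 <= 1 - Tc^-1.
Proof. by rewrite subr_ge0 invf_le1 // ler1n. Qed.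

Let cvg_Psi_pqb2 :
  cvgn (cellseries (Psi Phi) K (fun l i => p l i * q l i * b l i ^+ 2)).
Proof. exact: is_cvg_cellseries_Psi. Qed.

Let cvg_Psi_spb2 : cvgn (cellseries (Psi Phi) K
  (fun l i => (p l i + (1 - Tc^-1) * q l i) * q l i * b l i ^+ 2)).
Proof.
apply: is_cvg_cellseries_Psi => //.
rewrite (eq_cellseries (g := fun l i =>
  p l i * q l i * b l i ^+ 2 + (1 - Tc^-1) * (q l i ^+ 2 * b l i ^+ 2))); last by move=> *; ring.
exact/is_cvg_cellseriesD/is_cvg_cellseriesZ.
Qed.

Let cvg_Phi_spb2 : cvgn (cellseries Phi K
  (fun l i => (p l i + q l i) * p l i * b l i ^+ 2)).
Proof.
rewrite (eq_cellseries (g := fun l i =>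
  p l i ^+ 2 * b l i ^+ 2 + p l i * q l i * b l i ^+ 2)); last by move=> *; ring.
exact: is_cvg_cellseriesD.
Qed.

Let W_Psi_pq_gt0 : 0 < W (Psi Phi) (fun l i => p l i * q l i).
Proof.
apply: wsum_gt0 => // l i /Psi_Phi Phil iK; have [? [? ?]] := pqb_gt0 Phil iK.
by rewrite !mulr_gt0 ?exprn_gt0.
Qed.

Let W_Phi_pp_gt0 : 0 < W Phi (fun l i => p l i ^+ 2).
Proof.
apply: wsum_gt0 => //; first by exists 0%N.
by move=> l i Phil iK; have [? [? ?]] := pqb_gt0 Phil iK; rewrite !mulr_gt0 ?exprn_gt0.
Qed.

Let W_Psi_sp_gt0 : 0 < W (Psi Phi) (fun l i => (p l i + (1 - Tc^-1) * q l i) * q l i).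
Proof.
apply: wsum_gt0 => // l i /Psi_Phi Phil iK; have [? [? ?]] := pqb_gt0 Phil iK.
by rewrite !mulr_gt0 ?exprn_gt0 // ltr_wpDr // mulr_ge0 // ltW.
Qed.

Let W_Phi_sp_gt0 : 0 < W Phi (fun l i => (p l i + q l i) * p l i).
Proof.
apply: wsum_gt0 => //; first by exists 0%N.
by move=> l i Phil iK; have [? [? ?]] := pqb_gt0 Phil iK; rewrite !mulr_gt0 ?addr_gt0 ?exprn_gt0.
Qed.

Lemma R_rp_cvg : R_rp Phi K tc tp p q b s2 BW k @ \oo --> R_a_rp Phi K tc tp p q b BW k.
Proof.
rewrite /R_rp /R_a_rp (mulrC _ BW); under eq_fun => M do rewrite -(mulrA M%:R).
apply: cvg_rate => [M||]; first by rewrite -mulrA.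
  by rewrite mulr_gt0 // invr_gt0 ltr0n.
by rewrite mulr_gt0.
Qed.

Lemma I_spE M : I_sp Phi K tc p q b s2 k M =
  M%:R * (Tc^-1 * W (Psi Phi) (fun l i => (p l i + (1 - Tc^-1) * q l i) * q l i)
          + Tc^-1 * W Phi (fun l i => (p l i + q l i) * p l i))
  + I_sp Phi K tc p q b s2 k 0.
Proof. by rewrite /I_sp; ring. Qed.

Lemma I_spubE M : I_spub Phi K tc p q b s2 k M =
  M%:R * (Tc^-1 * W (Psi Phi) (fun l i => p l i * q l i) + Tc^-1 * W Phi (fun l i => p l i ^+ 2))
  + I_spub Phi K tc p q b s2 k 0.
Proof. by rewrite /I_spub; ring. Qed.

Lemma R_sp_cvg : R_sp Phi K tc p q b s2 BW k @ \oo --> R_a_sp Phi K tc p q b BW k.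
Proof.
rewrite /R_sp; under eq_fun => M do rewrite -(mulrA M%:R).
by apply: (cvg_rate I_spE); rewrite ?mulr_gt0 ?addr_gt0 // mulr_gt0 // invr_gt0.
Qed.

Lemma R_spub_cvg : R_spub Phi K tc p q b s2 BW k @ \oo --> R_a_spub Phi K tc p q b BW k.
Proof.
rewrite /R_spub; under eq_fun => M do rewrite -(mulrA M%:R).
by apply: (cvg_rate I_spubE); rewrite ?mulr_gt0 ?addr_gt0 // mulr_gt0 // invr_gt0.
Qed.

Lemma R_a_sp_le_R_a_spub : 0 <= BW ->
  R_a_sp Phi K tc p q b BW k <= R_a_spub Phi K tc p q b BW k.
Proof.
move=> BW_ge0; apply: ler_rate => //; first exact: mulr_gt0.
  by rewrite addr_gt0 // mulr_gt0 // invr_gt0.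
apply: lerD; (apply: ler_wpM2l; first by rewrite invr_ge0 ltW).
  apply: ler_wsum => // l i /Psi_Phi Phil iK; have [? [? ?]] := pqb_gt0 Phil iK.
  by rewrite ler_wpM2r ?lerDl ?mulr_ge0 // ltW.
apply: ler_wsum => // l i Phil iK; have [? [? ?]] := pqb_gt0 Phil iK.
by rewrite expr2 ler_wpM2r ?lerDl // ltW.
Qed.

End Corollary2.

Theorem corollary2 (R : realType) (Phi : pred nat) (K tc tp : nat)
  (p q b : nat -> nat -> R) (s2 BW : R) (k : nat) :
  Phi 0%N ->
  (exists l, Psi Phi l) ->
  (1 <= K)%N -> (K <= tp)%N -> (tp <= tc)%N -> (k < K)%N ->
  (forall l i, Phi l -> (i < K)%N -> 0 < p l i /\ 0 < q l i /\ 0 < b l i) ->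
  0 < s2 -> 0 < BW ->
  cvgn (cellseries Phi K (fun l i => p l i * b l i)) ->
  cvgn (cellseries Phi K (fun l i => q l i * b l i)) ->
  cvgn (cellseries Phi K (fun l i => p l i * q l i * b l i ^+ 2)) ->
  cvgn (cellseries Phi K (fun l i => p l i ^+ 2 * b l i ^+ 2)) ->
  cvgn (cellseries Phi K (fun l i => q l i ^+ 2 * b l i ^+ 2)) ->
  [/\ R_rp Phi K tc tp p q b s2 BW k @ \oo --> R_a_rp Phi K tc tp p q b BW k,
      R_sp Phi K tc p q b s2 BW k @ \oo --> R_a_sp Phi K tc p q b BW k,
      R_a_sp Phi K tc p q b BW k <= R_a_spub Phi K tc p q b BW k
    & R_spub Phi K tc p q b s2 BW k @ \oo --> R_a_spub Phi K tc p q b BW k].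
Proof.
(* The noise power and the first-order cell sums only enter the constant term
   of the interference. *)
move=> Phi0 Psi_neq0 K_gt0 K_le_tp tp_le_tc k_lt_K pqb_gt0 _ BW_gt0 _ _
  cvg_pqb2 cvg_ppb2 cvg_qqb2.
have tp_gt0 : (0 < tp)%N := leq_trans K_gt0 K_le_tp.
have tc_gt0 : (0 < tc)%N := leq_trans tp_gt0 tp_le_tc.
split.
- exact: R_rp_cvg.
- exact: R_sp_cvg.
- by apply: R_a_sp_le_R_a_spub => //; exact: ltW.
- exact: R_spub_cvg.
Qed.
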